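(* Consider the system $$\frac{df}{dt}= r\alpha f m(1-f-m)-(1+h)f,\qquad \frac{dm}{dt}=(1-r)\alpha f m(1-f-m)+(s-1)m,$$ with $0<r<1$, $\alpha>0$, $h\ge 0$, $0\le s<1$, and let $\mu=\frac{(1-r)(1+h)}{r(1-s)}$. Let $E_i^*=(f_i^*,\mu f_i^* )$ be an interior equilibrium, where $f_i^*$ is a positive root of $rα\mu f(1-(1+\mu)f)=1+h$. If $$\frac{r(1-s)}{2\{1+h-r(h+s)\}}<f^*_i<\frac{r(1-s)}{1+h-r(h+s)},$$ then $E_i^*$ is locally asymptotically stable.
   Context: Nondimensionalized FHMS (female harvesting, male stocking) model without Allee effect; $f,m$ are scaled female and male densities, $r$ the primary sex ratio, $h$ the scaled harvesting rate, $s$ the scaled stocking rate. Interior equilibria are those with $f>0,m>0$; they satisfy $m=\mu f$. *)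

From Stdlib Require Import Reals.
From Coquelicot Require Import Coquelicot.
Open Scope R_scope.

Definition Ff (r alpha h s f m : R) : R :=
  r * alpha * f * m * (1 - f - m) - (1 + h) * f.
Definition Fm (r alpha h s f m : R) : R :=
  (1 - r) * alpha * f * m * (1 - f - m) + (s - 1) * m.

Definition mu (r h s : R) : R := ((1 - r) * (1 + h)) / (r * (1 - s)).

Definition dist2 (f m f0 m0 : R) : R := sqrt ((f - f0)^2 + (m - m0)^2).

Definition is_solution_on (r alpha h s : R) (T : Rbar) (f m : R -> R) : Prop :=
  (forall t, 0 < t -> Rbar_lt t T ->
     is_derive f t (Ff r alpha h s (f t) (m t)) /\
     is_derive m t (Fm r alpha h s (f t) (m t))) /\
  filterlim f (at_right 0) (locally (f 0)) /\
  filterlim m (at_right 0) (locally (m 0)).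

Definition locally_asymptotically_stable (r alpha h s fe me : R) : Prop :=
  (forall eps, 0 < eps -> exists delta, 0 < delta /\
     forall (T : Rbar) (f m : R -> R), Rbar_lt 0 T ->
       is_solution_on r alpha h s T f m ->
       dist2 (f 0) (m 0) fe me < delta ->
       forall t, 0 <= t -> Rbar_lt t T -> dist2 (f t) (m t) fe me < eps) /\
  (exists eta, 0 < eta /\
     forall f m : R -> R, is_solution_on r alpha h s p_infty f m ->
       dist2 (f 0) (m 0) fe me < eta ->
       is_lim f p_infty fe /\ is_lim m p_infty me).

From Stdlib Require Import Reals Lra Psatz Classical.
From Coquelicot Require Import Coquelicot.
Open Scope R_scope.

(* 1. One-dimensional comparison facts: a function with nonpositive derivative
      does not increase; by continuous induction a sublevel set {V < K} on
      which V' <= 0 is forward invariant; hence V' <= -k V inside {V < K}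
      yields the decay V(t)(1 + k t) <= V(0).
   2. Lyapunov's method for the system: a function V comparable to the squared
      distance to an equilibrium and with orbital derivative <= -c |z|^2 on
      {V < K} gives stability and attractivity.
   3. For a 2 x 2 matrix J with tr J < 0 < det J, the quadratic form
      V(z) = det J |z|^2 + |adj J z|^2 has derivative 2 tr J det J |z|^2 along
      z' = J z, and this survives perturbations of quadratic size near 0.
   4. The FHMS field is its linearization plus a quadratic remainder, so every
      equilibrium with tr J < 0 < det J is locally asymptotically stable.
   5. At the interior equilibrium tr J < 0 always, and det J > 0 is exactly
      the lower bound 2 (1 + mu) fs > 1 assumed in the theorem. *)

Lemma continuous_induction (Q : R -> Prop) (t1 : R) :
  0 <= t1 ->
  (forall x, 0 <= x <= t1 -> (forall u, 0 <= u < x -> Q u) ->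
     exists d, 0 < d /\ forall u, x <= u < x + d -> Q u) ->
  forall t, 0 <= t <= t1 -> Q t.
Proof.
  intros Ht1 Hstep.
  set (E := fun t => 0 <= t <= t1 /\ forall u, 0 <= u < t -> Q u).
  assert (E0 : E 0) by (split; [lra | intros u Hu; lra]).
  destruct (completeness E) as [sg [Hub Hlub]].
  { exists t1; intros x Hx; apply Hx. }
  { exists 0; exact E0. }
  assert (Hsg : 0 <= sg <= t1) by (split; [apply Hub, E0 | apply Hlub; intros x Hx; apply Hx]).
  assert (Hbelow : forall u, 0 <= u < sg -> Q u).
  { intros u Hu. destruct (classic (Q u)) as [HQ | HnQ]; [exact HQ |].
    enough (sg <= u) by lra.
    apply Hlub; intros x [_ Hx].
    destruct (Rle_lt_dec x u) as [Hxu | Hux]; [exact Hxu |].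
    exfalso; apply HnQ, Hx; lra. }
  destruct (Hstep sg Hsg Hbelow) as [d [Hd Hright]].
  assert (Hend : sg = t1).
  { destruct (Rle_lt_dec t1 sg) as [Hge | Hlt]; [lra | exfalso].
    set (t' := Rmin (sg + d / 2) t1).
    assert (sg < t') by (apply Rmin_glb_lt; lra).
    assert (t' <= t1) by apply Rmin_r.
    assert (t' <= sg + d / 2) by apply Rmin_l.
    assert (Et' : E t').
    { split; [lra |].
      intros u Hu. destruct (Rlt_le_dec u sg); [apply Hbelow | apply Hright]; lra. }
    pose proof (Hub t' Et'); lra. }
  intros t Ht. destruct (Rlt_le_dec t sg); [apply Hbelow | apply Hright]; lra.
Qed.

Lemma lt_persists_right (W : R -> R) (x K : R) :
  filterlim W (at_right x) (locally (W x)) -> W x < K ->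
  exists d, 0 < d /\ forall u, x <= u < x + d -> W u < K.
Proof.
  intros Hlim HK.
  assert (Hgap : 0 < K - W x) by lra.
  destruct (proj1 (filterlim_locally W (W x)) Hlim (mkposreal _ Hgap)) as [d Hd].
  exists d; split; [apply cond_pos |].
  intros u Hu. destruct (Req_dec u x) as [-> | Hne]; [exact HK |].
  assert (Hball : ball x d u).
  { change (Rabs (u - x) < d). rewrite Rabs_pos_eq; lra. }
  pose proof (Hd u Hball ltac:(lra)) as Hu'.
  change (Rabs (W u - W x) < K - W x) in Hu'. apply Rabs_def2 in Hu'. lra.
Qed.

Lemma derive_continuous_right (W : R -> R) (x l : R) :
  is_derive W x l -> filterlim W (at_right x) (locally (W x)).
Proof.
  intros Hd. apply (filterlim_filter_le_1 _ (filter_le_within (F := locally x) _)).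
  apply (ex_derive_continuous (K := R_AbsRing) (V := R_NormedModule)).
  exists l; exact Hd.
Qed.

Lemma derive_continuous_left (W : R -> R) (x l : R) :
  is_derive W x l -> filterlim W (at_left x) (locally (W x)).
Proof.
  intros Hd. apply (filterlim_filter_le_1 _ (filter_le_within (F := locally x) _)).
  apply (ex_derive_continuous (K := R_AbsRing) (V := R_NormedModule)).
  exists l; exact Hd.
Qed.

Definition rcont0 (g : R -> R) : Prop := filterlim g (at_right 0) (locally (g 0)).

Lemma rcont0_const (c : R) : rcont0 (fun _ => c).
Proof. apply filterlim_const. Qed.

Lemma rcont0_id : rcont0 (fun t => t).
Proof. intros P [eps HP]. exists eps. intros y Hy _. apply HP, Hy. Qed.

Lemma rcont0_plus (g1 g2 : R -> R) :
  rcont0 g1 -> rcont0 g2 -> rcont0 (fun t => g1 t + g2 t).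
Proof.
  intros H1 H2.
  exact (filterlim_comp_2 g1 g2 Rplus H1 H2
           (@filterlim_plus R_AbsRing R_NormedModule (g1 0) (g2 0))).
Qed.

Lemma rcont0_mult (g1 g2 : R -> R) :
  rcont0 g1 -> rcont0 g2 -> rcont0 (fun t => g1 t * g2 t).
Proof.
  intros H1 H2.
  exact (filterlim_comp_2 g1 g2 Rmult H1 H2 (@filterlim_mult R_AbsRing (g1 0) (g2 0))).
Qed.

Lemma rcont0_shift (g : R -> R) (c : R) : rcont0 g -> rcont0 (fun t => g t - c).
Proof. intros Hg. exact (rcont0_plus g (fun _ => - c) Hg (rcont0_const _)). Qed.

Lemma is_derive_shift (g : R -> R) (t c l : R) :
  is_derive g t l -> is_derive (fun t => g t - c) t l.
Proof.
  intros Hg. replace l with (l - 0) by ring.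
  exact (is_derive_minus g (fun _ => c) t l 0 Hg (is_derive_const c t)).
Qed.

Lemma nonincreasing_of_deriv_nonpos (W D : R -> R) (T : Rbar) :
  (forall t, 0 < t -> Rbar_lt t T -> is_derive W t (D t)) ->
  (forall t, 0 < t -> Rbar_lt t T -> D t <= 0) ->
  rcont0 W ->
  forall t, 0 <= t -> Rbar_lt t T -> W t <= W 0.
Proof.
  intros Hder Hneg Hrc t Ht HtT.
  destruct (Rle_lt_dec t 0) as [Ht0 | Htpos]; [replace t with 0 by lra; lra |].
  assert (HinT : forall x, x <= t -> Rbar_lt x T).
  { intros x Hx. apply Rbar_le_lt_trans with t; [simpl; lra | exact HtT]. }
  assert (Hmvt : forall a, 0 < a < t -> W t <= W a).
  { intros a Ha.
    destruct (MVT_gen W a t D) as [c [Hc Hdiff]];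
      rewrite ?Rmin_left, ?Rmax_right in * by lra.
    - intros x Hx. apply Hder; [lra | apply HinT; lra].
    - intros x Hx. apply continuity_pt_filterlim.
      apply (ex_derive_continuous (K := R_AbsRing) (V := R_NormedModule)).
      exists (D x). apply Hder; [lra | apply HinT; lra].
    - assert (D c <= 0) by (apply Hneg; [lra | apply HinT; lra]).
      assert (D c * (t - a) <= 0) by (apply Rmult_le_0_r; lra).
      lra. }
  apply (closed_filterlim_loc W (fun y => W t <= y) (W 0) Hrc); [| apply closed_ge].
  exists (mkposreal t Htpos). intros a Ha Hapos.
  change (Rabs (a - 0) < t) in Ha. rewrite Rminus_0_r, Rabs_pos_eq in Ha by lra.
  apply Hmvt; lra.
Qed.

Lemma sublevel_invariant (V D : R -> R) (T : Rbar) (K : R) :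
  (forall t, 0 < t -> Rbar_lt t T -> is_derive V t (D t)) ->
  (forall t, 0 < t -> Rbar_lt t T -> V t < K -> D t <= 0) ->
  rcont0 V -> V 0 < K ->
  forall t, 0 <= t -> Rbar_lt t T -> V t < K.
Proof.
  intros Hder Hneg Hrc HK t1 Ht1 Ht1T.
  assert (HinT : forall x, x <= t1 -> Rbar_lt x T).
  { intros x Hx. apply Rbar_le_lt_trans with t1; [simpl; lra | exact Ht1T]. }
  apply (continuous_induction (fun u => V u < K) t1 Ht1); [| lra].
  intros x Hx Hbelow.
  destruct (Rle_lt_dec x 0) as [Hx0 | Hxpos].
  { replace x with 0 by lra. exact (lt_persists_right V 0 K Hrc HK). }
  assert (Hdx : is_derive V x (D x)) by (apply Hder; [lra | apply HinT; lra]).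
  (* on [0, x) the derivative is nonpositive, so V stays below V 0 there *)
  assert (Hmono : forall u, 0 <= u < x -> V u <= V 0).
  { intros u Hu.
    apply (nonincreasing_of_deriv_nonpos V D (Finite x)); simpl; try lra.
    - intros w Hw Hwx. apply Hder; [lra | apply HinT; simpl in Hwx; lra].
    - intros w Hw Hwx. apply Hneg; [lra | apply HinT; simpl in Hwx; lra | apply Hbelow; lra].
    - exact Hrc. }
  assert (HVx : V x <= V 0).
  { apply (closed_filterlim_loc V (fun y => y <= V 0) (V x)
             (derive_continuous_left V x (D x) Hdx)); [| apply closed_le].
    exists (mkposreal x Hxpos). intros u Hu Hux.
    change (Rabs (u - x) < x) in Hu. apply Rabs_def2 in Hu.
    apply Hmono; lra. }
  apply (lt_persists_right V x K (derive_continuous_right V x (D x) Hdx)). lra.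
Qed.

Lemma lyapunov_decay (V D : R -> R) (T : Rbar) (K k : R) :
  0 <= k ->
  (forall t, 0 < t -> Rbar_lt t T -> is_derive V t (D t)) ->
  (forall t, 0 < t -> Rbar_lt t T -> 0 <= V t) ->
  (forall t, 0 < t -> Rbar_lt t T -> V t < K -> D t <= - k * V t) ->
  rcont0 V -> V 0 < K ->
  forall t, 0 <= t -> Rbar_lt t T -> V t * (1 + k * t) <= V 0.
Proof.
  intros Hk Hder Hpos Hdec Hrc HK t Ht HtT.
  assert (Hinv := sublevel_invariant V D T K Hder).
  assert (Hbelow : forall u, 0 <= u -> Rbar_lt u T -> V u < K).
  { apply Hinv; [| exact Hrc | exact HK].
    intros u Hu HuT HVu. specialize (Hdec u Hu HuT HVu). specialize (Hpos u Hu HuT). nra. }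
  replace (V 0) with (V 0 * (1 + k * 0)) by ring.
  apply (nonincreasing_of_deriv_nonpos (fun u => V u * (1 + k * u))
           (fun u => D u * (1 + k * u) + V u * k) T); [| | | exact Ht | exact HtT].
  - intros u Hu HuT.
    apply (is_derive_mult V (fun u => 1 + k * u) u (D u) k (Hder u Hu HuT)); [| apply Rmult_comm].
    auto_derive; [exact I | ring].
  - intros u Hu HuT.
    specialize (Hdec u Hu HuT (Hbelow u ltac:(lra) HuT)). specialize (Hpos u Hu HuT).
    assert (0 <= k * u) by (apply Rmult_le_pos; lra).
    assert (D u * (1 + k * u) <= - k * V u * (1 + k * u)) by (apply Rmult_le_compat_r; lra).
    assert (0 <= k * u * (k * V u)) by (repeat apply Rmult_le_pos; lra).
    lra.
  - apply rcont0_mult; [exact Hrc |].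
    apply rcont0_plus; [apply rcont0_const |].
    apply rcont0_mult; [apply rcont0_const | apply rcont0_id].
Qed.

Definition sqdist (u v fe me : R) : R := (u - fe) ^ 2 + (v - me) ^ 2.

Lemma sqdist_nonneg (u v fe me : R) : 0 <= sqdist u v fe me.
Proof. unfold sqdist. pose proof (pow2_ge_0 (u - fe)). pose proof (pow2_ge_0 (v - me)). lra. Qed.

Lemma dist2_lt (u v fe me eps : R) :
  0 < eps -> sqdist u v fe me < eps ^ 2 -> dist2 u v fe me < eps.
Proof.
  intros Heps HS. unfold dist2. rewrite <- (sqrt_pow2 eps) by lra.
  apply sqrt_lt_1_alt. split; [apply sqdist_nonneg | exact HS].
Qed.

Lemma sqdist_lt (u v fe me d : R) :
  dist2 u v fe me < sqrt d -> sqdist u v fe me < d.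
Proof. apply sqrt_lt_0_alt. Qed.

Lemma abs_lt_of_sq_lt (x e : R) : 0 < e -> x ^ 2 < e ^ 2 -> Rabs x < e.
Proof. intros He Hx. apply Rabs_def1; nra. Qed.

Lemma converges_of_sqdist_decay (f m : R -> R) (fe me k C : R) :
  0 < k ->
  (forall t, 0 <= t -> sqdist (f t) (m t) fe me * (1 + k * t) <= C) ->
  is_lim f p_infty fe /\ is_lim m p_infty me.
Proof.
  intros Hk Hdecay.
  assert (Hsmall : forall eps, 0 < eps -> exists M, forall t, M < t ->
            sqdist (f t) (m t) fe me < eps ^ 2).
  { intros eps Heps. exists (Rmax 0 (C / (k * eps ^ 2))). intros t Ht.
    assert (H0t := Rle_lt_trans _ _ _ (Rmax_l 0 (C / (k * eps ^ 2))) Ht).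
    assert (HCt := Rle_lt_trans _ _ _ (Rmax_r 0 (C / (k * eps ^ 2))) Ht).
    assert (Hke : 0 < k * eps ^ 2) by (apply Rmult_lt_0_compat; [lra | apply pow_lt; lra]).
    apply Rmult_lt_compat_r with (r := k * eps ^ 2) in HCt; [| exact Hke].
    unfold Rdiv in HCt. rewrite Rmult_assoc, Rinv_l, Rmult_1_r in HCt by lra.
    specialize (Hdecay t ltac:(lra)).
    destruct (Rlt_le_dec (sqdist (f t) (m t) fe me) (eps ^ 2)) as [Hlt | Hge]; [exact Hlt |].
    assert (eps ^ 2 * (1 + k * t) <= sqdist (f t) (m t) fe me * (1 + k * t))
      by (apply Rmult_le_compat_r; nra).
    nra. }
  split; apply is_lim_spec; intros eps;
    destruct (Hsmall eps (cond_pos eps)) as [M HM]; exists M; intros t Ht;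
    specialize (HM t Ht); unfold sqdist in HM;
    pose proof (pow2_ge_0 (f t - fe)); pose proof (pow2_ge_0 (m t - me));
    apply abs_lt_of_sq_lt; try apply cond_pos; lra.
Qed.

Section LyapunovMethod.

Variables r alpha h s fe me : R.
Variables V Vdot : R -> R -> R.
Variables a b c K : R.
Hypothesis a_pos : 0 < a.
Hypothesis c_pos : 0 < c.
Hypothesis K_pos : 0 < K.
Hypothesis V_along : forall (f m : R -> R) t,
  is_derive f t (Ff r alpha h s (f t) (m t)) ->
  is_derive m t (Fm r alpha h s (f t) (m t)) ->
  is_derive (fun t => V (f t) (m t)) t (Vdot (f t) (m t)).
Hypothesis V_rcont0 : forall f m : R -> R,
  rcont0 f -> rcont0 m -> rcont0 (fun t => V (f t) (m t)).
Hypothesis V_lower : forall u v, a * sqdist u v fe me <= V u v.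
Hypothesis V_upper : forall u v, V u v <= b * sqdist u v fe me.
Hypothesis V_decrease : forall u v, V u v < K -> Vdot u v <= - c * sqdist u v fe me.

Lemma b_pos : 0 < b.
Proof.
  pose proof (V_lower (fe + 1) me). pose proof (V_upper (fe + 1) me).
  unfold sqdist in *. replace (fe + 1 - fe) with 1 in * by ring.
  replace (me - me) with 0 in * by ring. nra.
Qed.

Lemma solution_decay (T : Rbar) (f m : R -> R) :
  is_solution_on r alpha h s T f m -> V (f 0) (m 0) < K ->
  forall t, 0 <= t -> Rbar_lt t T ->
    a * sqdist (f t) (m t) fe me * (1 + c / b * t) <= V (f 0) (m 0).
Proof.
  intros [Hder [Hf0 Hm0]] HK t Ht HtT.
  pose proof b_pos as Hb.
  assert (Hk : 0 <= c / b) by (apply Rlt_le, Rdiv_lt_0_compat; lra).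
  eapply Rle_trans.
  { apply Rmult_le_compat_r; [nra | apply V_lower]. }
  apply (lyapunov_decay (fun t => V (f t) (m t)) (fun t => Vdot (f t) (m t)) T K (c / b) Hk);
    [| | | exact (V_rcont0 f m Hf0 Hm0) | exact HK | exact Ht | exact HtT].
  - intros u Hu HuT. destruct (Hder u Hu HuT). apply V_along; assumption.
  - intros u _ _. pose proof (V_lower (f u) (m u)).
    pose proof (sqdist_nonneg (f u) (m u) fe me). nra.
  - intros u _ _ HVu. pose proof (V_decrease (f u) (m u) HVu).
    pose proof (V_upper (f u) (m u)).
    assert (c / b * V (f u) (m u) <= c * sqdist (f u) (m u) fe me); [| lra].
    apply (Rmult_le_reg_l b); [lra |].
    replace (b * (c / b * V (f u) (m u))) with (c * V (f u) (m u)) by (field; lra).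
    nra.
Qed.

Lemma start_below (u v theta : R) :
  dist2 u v fe me < sqrt (theta / b) -> V u v < theta.
Proof.
  intros Hd. pose proof b_pos. pose proof (sqdist_lt _ _ _ _ _ Hd) as HS.
  pose proof (V_upper u v).
  apply Rmult_lt_compat_l with (r := b) in HS; [| lra].
  replace (b * (theta / b)) with theta in HS by (field; lra). lra.
Qed.

Theorem lyapunov_asymptotic_stability :
  locally_asymptotically_stable r alpha h s fe me.
Proof.
  pose proof b_pos as Hb.
  split.
  - intros eps Heps.
    set (theta := Rmin K (a * eps ^ 2)).
    assert (Htheta : 0 < theta) by (apply Rmin_glb_lt; [lra | apply Rmult_lt_0_compat; nra]).
    assert (HthetaK : theta <= K) by apply Rmin_l.
    assert (Htheta_eps : theta <= a * eps ^ 2) by apply Rmin_r.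
    exists (sqrt (theta / b)). split; [apply sqrt_lt_R0, Rdiv_lt_0_compat; lra |].
    intros T f m _ Hsol Hd t Ht HtT.
    pose proof (start_below _ _ _ Hd) as HV0.
    assert (HV0K : V (f 0) (m 0) < K) by lra.
    pose proof (solution_decay T f m Hsol HV0K t Ht HtT) as Hdecay.
    pose proof (sqdist_nonneg (f t) (m t) fe me).
    assert (0 <= c / b * t) by (apply Rmult_le_pos; [apply Rlt_le, Rdiv_lt_0_compat |]; lra).
    apply dist2_lt; [exact Heps |].
    apply (Rmult_lt_reg_l a); [exact a_pos |]. nra.
  - exists (sqrt (K / b)). split; [apply sqrt_lt_R0, Rdiv_lt_0_compat; lra |].
    intros f m Hsol Hd.
    pose proof (start_below _ _ _ Hd) as HV0.
    apply (converges_of_sqdist_decay f m fe me (c / b) (V (f 0) (m 0) / a));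
      [apply Rdiv_lt_0_compat; lra |].
    intros t Ht.
    pose proof (solution_decay p_infty f m Hsol HV0 t Ht I).
    apply (Rmult_le_reg_l a); [exact a_pos |].
    replace (a * (V (f 0) (m 0) / a)) with (V (f 0) (m 0)) by (field; lra). lra.
Qed.

End LyapunovMethod.

(* The quadratic Lyapunov function of a planar linear system z' = J z,
   J = [[j11, j12], [j21, j22]]:  V(z) = det J |z|^2 + |adj J z|^2.
   Its derivative along z' = J z is 2 tr J det J |z|^2, because
   adj J + J = tr J for 2 x 2 matrices; so V is a strict Lyapunov function
   exactly when tr J < 0 < det J. *)
Section QuadraticLyapunov.

Variables j11 j12 j21 j22 : R.

Definition det2 : R := j11 * j22 - j12 * j21.
Definition tr2 : R := j11 + j22.

Definition p11 : R := det2 + j21 ^ 2 + j22 ^ 2.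
Definition p12 : R := - (j11 * j21 + j12 * j22).
Definition p22 : R := det2 + j11 ^ 2 + j12 ^ 2.

Definition Vq (x y : R) : R := p11 * (x * x) + 2 * p12 * (x * y) + p22 * (y * y).

Definition Vd (x y dx dy : R) : R :=
  2 * (p11 * x + p12 * y) * dx + 2 * (p12 * x + p22 * y) * dy.

Lemma Vq_adjugate (x y : R) :
  Vq x y = det2 * (x ^ 2 + y ^ 2) + (j22 * x - j12 * y) ^ 2 + (j11 * y - j21 * x) ^ 2.
Proof. unfold Vq, p11, p12, p22. ring. Qed.

Lemma Vq_lower (x y : R) : det2 * (x ^ 2 + y ^ 2) <= Vq x y.
Proof.
  rewrite Vq_adjugate.
  pose proof (pow2_ge_0 (j22 * x - j12 * y)). pose proof (pow2_ge_0 (j11 * y - j21 * x)).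
  lra.
Qed.

Definition Vbound : R := det2 + 2 * (j11 ^ 2 + j12 ^ 2 + j21 ^ 2 + j22 ^ 2).

Lemma Vq_upper (x y : R) : Vq x y <= Vbound * (x ^ 2 + y ^ 2).
Proof.
  assert (Hcs : forall p q, (p * x - q * y) ^ 2 <= 2 * (p ^ 2 + q ^ 2) * (x ^ 2 + y ^ 2)).
  { intros p q.
    assert (Hgap : 2 * (p ^ 2 + q ^ 2) * (x ^ 2 + y ^ 2) - (p * x - q * y) ^ 2
                   = (p * x + q * y) ^ 2 + 2 * (p * y) ^ 2 + 2 * (q * x) ^ 2) by ring.
    pose proof (pow2_ge_0 (p * x + q * y)). pose proof (pow2_ge_0 (p * y)).
    pose proof (pow2_ge_0 (q * x)). lra. }
  rewrite Vq_adjugate.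
  replace ((j11 * y - j21 * x) ^ 2) with ((j21 * x - j11 * y) ^ 2) by ring.
  pose proof (Hcs j22 j12). pose proof (Hcs j21 j11).
  unfold Vbound. lra.
Qed.

Lemma is_derive_Vq (x y : R -> R) (t dx dy : R) :
  is_derive x t dx -> is_derive y t dy ->
  is_derive (fun t => Vq (x t) (y t)) t (Vd (x t) (y t) dx dy).
Proof.
  intros Hx Hy.
  assert (Hprod : forall u v du dv, is_derive u t du -> is_derive v t dv ->
            is_derive (fun t => u t * v t) t (du * v t + u t * dv)).
  { intros u v du dv Hu Hv. exact (is_derive_mult u v t du dv Hu Hv Rmult_comm). }
  assert (Hxx := is_derive_scal _ t p11 _ (Hprod x x dx dx Hx Hx)).
  assert (Hxy := is_derive_scal _ t (2 * p12) _ (Hprod x y dx dy Hx Hy)).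
  assert (Hyy := is_derive_scal _ t p22 _ (Hprod y y dy dy Hy Hy)).
  assert (HV := is_derive_plus _ _ t _ _ (is_derive_plus _ _ t _ _ Hxx Hxy) Hyy).
  replace (Vd (x t) (y t) dx dy)
    with (p11 * (dx * x t + x t * dx) + 2 * p12 * (dx * y t + x t * dy)
          + p22 * (dy * y t + y t * dy)) by (unfold Vd; ring).
  exact HV.
Qed.

Lemma rcont0_Vq (x y : R -> R) :
  rcont0 x -> rcont0 y -> rcont0 (fun t => Vq (x t) (y t)).
Proof.
  intros Hx Hy. unfold Vq.
  apply rcont0_plus; [apply rcont0_plus |];
    apply rcont0_mult; try apply rcont0_const; apply rcont0_mult; assumption.
Qed.

Lemma Vd_linear_part (x y p q : R) :
  Vd x y (j11 * x + j12 * y + p) (j21 * x + j22 * y + q)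
  = 2 * tr2 * det2 * (x ^ 2 + y ^ 2) + Vd x y p q.
Proof. unfold Vd, p11, p12, p22, tr2, det2. ring. Qed.

Definition pnorm : R := Rabs p11 + Rabs p12 + Rabs p22.

Lemma Vd_small (x y p q rho : R) :
  Rabs x <= rho -> Rabs y <= rho ->
  Rabs (Vd x y p q) <= 2 * pnorm * rho * (Rabs p + Rabs q).
Proof.
  intros Hx Hy.
  assert (Hlin : forall u w, Rabs (u * x + w * y) <= (Rabs u + Rabs w) * rho).
  { intros u w. eapply Rle_trans; [apply Rabs_triang |]. rewrite !Rabs_mult.
    pose proof (Rabs_pos u). pose proof (Rabs_pos w).
    pose proof (Rmult_le_compat_l _ _ _ (Rabs_pos u) Hx).
    pose proof (Rmult_le_compat_l _ _ _ (Rabs_pos w) Hy). lra. }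
  assert (H1 : Rabs (p11 * x + p12 * y) <= pnorm * rho).
  { eapply Rle_trans; [apply Hlin |]. apply Rmult_le_compat_r;
      [pose proof (Rabs_pos x); lra | unfold pnorm; pose proof (Rabs_pos p22); lra]. }
  assert (H2 : Rabs (p12 * x + p22 * y) <= pnorm * rho).
  { eapply Rle_trans; [apply Hlin |]. apply Rmult_le_compat_r;
      [pose proof (Rabs_pos x); lra | unfold pnorm; pose proof (Rabs_pos p11); lra]. }
  unfold Vd. eapply Rle_trans; [apply Rabs_triang |]. rewrite !Rabs_mult.
  rewrite (Rabs_pos_eq 2) by lra.
  pose proof (Rmult_le_compat_r _ _ _ (Rabs_pos p) H1).
  pose proof (Rmult_le_compat_r _ _ _ (Rabs_pos q) H2).
  nra.
Qed.

Lemma Vd_perturbed_bound (x y p q rho N : R) :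
  Rabs x <= rho -> Rabs y <= rho ->
  Rabs p + Rabs q <= N * (x ^ 2 + y ^ 2) ->
  0 <= rho -> 2 * pnorm * rho * N <= - (tr2 * det2) ->
  Vd x y (j11 * x + j12 * y + p) (j21 * x + j22 * y + q) <= tr2 * det2 * (x ^ 2 + y ^ 2).
Proof.
  intros Hx Hy HN Hrho Hsmall.
  rewrite Vd_linear_part.
  pose proof (Vd_small x y p q rho Hx Hy) as Hpert.
  pose proof (Rle_abs (Vd x y p q)).
  assert (HS : 0 <= x ^ 2 + y ^ 2) by (pose proof (pow2_ge_0 x); pose proof (pow2_ge_0 y); lra).
  assert (Hpn : 0 <= pnorm) by (unfold pnorm; pose proof (Rabs_pos p11);
    pose proof (Rabs_pos p12); pose proof (Rabs_pos p22); lra).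
  assert (2 * pnorm * rho * (Rabs p + Rabs q) <= 2 * pnorm * rho * (N * (x ^ 2 + y ^ 2)))
    by (apply Rmult_le_compat_l; [repeat apply Rmult_le_pos; lra | exact HN]).
  assert (2 * pnorm * rho * N * (x ^ 2 + y ^ 2) <= - (tr2 * det2) * (x ^ 2 + y ^ 2))
    by (apply Rmult_le_compat_r; assumption).
  lra.
Qed.

End QuadraticLyapunov.

Definition free (fe me : R) : R := 1 - fe - me.

Definition jac11 (r alpha h fe me : R) : R := r * alpha * (me * free fe me - fe * me) - (1 + h).
Definition jac12 (r alpha fe me : R) : R := r * alpha * (fe * free fe me - fe * me).
Definition jac21 (r alpha fe me : R) : R := (1 - r) * alpha * (me * free fe me - fe * me).
Definition jac22 (r alpha s fe me : R) : R :=
  (1 - r) * alpha * (fe * free fe me - fe * me) - (1 - s).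

(* Nonlinear part of f m (1 - f - m) at (fe + x, me + y); it is common to
   both equations. *)
Definition remainder (fe me x y : R) : R :=
  x * y * free fe me - (fe * y + me * x) * (x + y) - x * y * (x + y).

Lemma Ff_expansion (r alpha h s fe me x y : R) :
  Ff r alpha h s (fe + x) (me + y) = Ff r alpha h s fe me +
    (jac11 r alpha h fe me * x + jac12 r alpha fe me * y + r * alpha * remainder fe me x y).
Proof. unfold Ff, jac11, jac12, remainder, free. ring. Qed.

Lemma Fm_expansion (r alpha h s fe me x y : R) :
  Fm r alpha h s (fe + x) (me + y) = Fm r alpha h s fe me +
    (jac21 r alpha fe me * x + jac22 r alpha s fe me * y
     + (1 - r) * alpha * remainder fe me x y).
Proof. unfold Fm, jac21, jac22, remainder, free. ring. Qed.

Lemma remainder_bound (fe me x y : R) :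
  Rabs x <= 1 -> Rabs y <= 1 ->
  Rabs (remainder fe me x y)
    <= (Rabs (free fe me) + 2 * (Rabs fe + Rabs me) + 1) * (x ^ 2 + y ^ 2).
Proof.
  intros Hx Hy. unfold remainder.
  pose proof (Rabs_pos x) as HX. pose proof (Rabs_pos y) as HY.
  pose proof (Rabs_pos fe). pose proof (Rabs_pos me). pose proof (Rabs_pos (free fe me)).
  assert (Hsum : Rabs (x + y) <= Rabs x + Rabs y) by apply Rabs_triang.
  assert (T1 : Rabs (x * y * free fe me) = Rabs x * Rabs y * Rabs (free fe me))
    by (rewrite !Rabs_mult; ring).
  assert (T2 : Rabs ((fe * y + me * x) * (x + y))
               <= (Rabs fe * Rabs y + Rabs me * Rabs x) * (Rabs x + Rabs y)).
  { rewrite Rabs_mult. apply Rmult_le_compat; try apply Rabs_pos; [| exact Hsum].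
    eapply Rle_trans; [apply Rabs_triang |]. rewrite !Rabs_mult. lra. }
  assert (T3 : Rabs (x * y * (x + y)) <= Rabs x * Rabs y * (Rabs x + Rabs y)).
  { rewrite !Rabs_mult. apply Rmult_le_compat_l; [apply Rmult_le_pos; assumption | exact Hsum]. }
  assert (Htri : forall A B C, Rabs (A - B - C) <= Rabs A + Rabs B + Rabs C).
  { intros A B C. unfold Rminus. eapply Rle_trans; [apply Rabs_triang |].
    rewrite Rabs_Ropp. pose proof (Rabs_triang A (- B)). rewrite Rabs_Ropp in *. lra. }
  eapply Rle_trans; [apply Htri |]. rewrite T1.
  rewrite <- (pow2_abs x), <- (pow2_abs y).
  assert (Hxy : Rabs x * Rabs y <= Rabs x ^ 2 + Rabs y ^ 2) by nra.
  assert (Hcub : Rabs x * Rabs y * (Rabs x + Rabs y) <= Rabs x ^ 2 + Rabs y ^ 2) by nra.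
  assert (Hmix : (Rabs fe * Rabs y + Rabs me * Rabs x) * (Rabs x + Rabs y)
                 <= 2 * (Rabs fe + Rabs me) * (Rabs x ^ 2 + Rabs y ^ 2)) by nra.
  nra.
Qed.

Lemma small_radius (A N g : R) :
  0 <= A -> 0 <= N -> 0 < g -> exists rho, 0 < rho /\ rho <= 1 /\ A * rho * N <= g.
Proof.
  intros HA HN Hg.
  assert (Hq : 0 < g / (A * N + 1)) by (apply Rdiv_lt_0_compat; nra).
  exists (Rmin 1 (g / (A * N + 1))).
  assert (Hrho1 := Rmin_l 1 (g / (A * N + 1))).
  assert (Hrhoq := Rmin_r 1 (g / (A * N + 1))).
  assert (Hrho : 0 < Rmin 1 (g / (A * N + 1))) by (apply Rmin_glb_lt; lra).
  split; [exact Hrho | split; [exact Hrho1 |]].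
  apply Rmult_le_compat_r with (r := A * N + 1) in Hrhoq; [| nra].
  replace (g / (A * N + 1) * (A * N + 1)) with g in Hrhoq by (field; nra).
  nra.
Qed.

Section HurwitzEquilibrium.

Variables r alpha h s fe me : R.
Hypothesis equilibrium_f : Ff r alpha h s fe me = 0.
Hypothesis equilibrium_m : Fm r alpha h s fe me = 0.

Local Notation J11 := (jac11 r alpha h fe me).
Local Notation J12 := (jac12 r alpha fe me).
Local Notation J21 := (jac21 r alpha fe me).
Local Notation J22 := (jac22 r alpha s fe me).
Local Notation tr := (tr2 J11 J22).
Local Notation det := (det2 J11 J12 J21 J22).

Hypothesis trace_neg : tr < 0.
Hypothesis det_pos : 0 < det.

Lemma orbital_derivative_near_equilibrium :
  exists rho, 0 < rho /\ forall u v, Rabs (u - fe) <= rho -> Rabs (v - me) <= rho ->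
    Vd J11 J12 J21 J22 (u - fe) (v - me) (Ff r alpha h s u v) (Fm r alpha h s u v)
    <= tr * det * sqdist u v fe me.
Proof.
  set (M := Rabs (free fe me) + 2 * (Rabs fe + Rabs me) + 1).
  set (N := (Rabs (r * alpha) + Rabs ((1 - r) * alpha)) * M).
  set (P := pnorm J11 J12 J21 J22).
  assert (HM : 0 <= M) by (unfold M; pose proof (Rabs_pos (free fe me));
    pose proof (Rabs_pos fe); pose proof (Rabs_pos me); lra).
  assert (HN : 0 <= N) by (unfold N; pose proof (Rabs_pos (r * alpha));
    pose proof (Rabs_pos ((1 - r) * alpha)); apply Rmult_le_pos; lra).
  assert (HP : 0 <= P) by (unfold P, pnorm; pose proof (Rabs_pos (p11 J11 J12 J21 J22));
    pose proof (Rabs_pos (p12 J11 J12 J21 J22)); pose proof (Rabs_pos (p22 J11 J12 J21 J22)); lra).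
  assert (Hgap : 0 < - (tr * det)) by nra.
  destruct (small_radius (2 * P) N (- (tr * det))) as [rho [Hrho [Hrho1 Hsmall]]];
    [lra | exact HN | exact Hgap |].
  exists rho. split; [exact Hrho |].
  intros u v Hu Hv.
  set (x := u - fe) in *. set (y := v - me) in *.
  assert (Hf : Ff r alpha h s u v = J11 * x + J12 * y + r * alpha * remainder fe me x y).
  { replace u with (fe + x) at 1 by (unfold x; ring).
    replace v with (me + y) at 1 by (unfold y; ring).
    rewrite Ff_expansion, equilibrium_f. ring. }
  assert (Hm : Fm r alpha h s u v = J21 * x + J22 * y + (1 - r) * alpha * remainder fe me x y).
  { replace u with (fe + x) at 1 by (unfold x; ring).
    replace v with (me + y) at 1 by (unfold y; ring).
    rewrite Fm_expansion, equilibrium_m. ring. }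
  rewrite Hf, Hm. unfold sqdist. fold x y.
  apply (Vd_perturbed_bound _ _ _ _ _ _ _ _ rho N); try assumption; [| lra].
  pose proof (remainder_bound fe me x y ltac:(lra) ltac:(lra)) as Hrem. fold M in Hrem.
  rewrite (Rabs_mult (r * alpha)), (Rabs_mult ((1 - r) * alpha)).
  assert (Hc : 0 <= Rabs (r * alpha) + Rabs ((1 - r) * alpha))
    by (pose proof (Rabs_pos (r * alpha)); pose proof (Rabs_pos ((1 - r) * alpha)); lra).
  pose proof (Rmult_le_compat_l _ _ _ Hc Hrem). unfold N. lra.
Qed.

Theorem hurwitz_equilibrium_stable : locally_asymptotically_stable r alpha h s fe me.
Proof.
  destruct orbital_derivative_near_equilibrium as [rho [Hrho Hdecrease]].
  apply (lyapunov_asymptotic_stability r alpha h s fe me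
           (fun u v => Vq J11 J12 J21 J22 (u - fe) (v - me))
           (fun u v => Vd J11 J12 J21 J22 (u - fe) (v - me)
                          (Ff r alpha h s u v) (Fm r alpha h s u v))
           det (Vbound J11 J12 J21 J22) (- (tr * det)) (det * rho ^ 2)).
  - exact det_pos.
  - nra.
  - apply Rmult_lt_0_compat; [exact det_pos | apply pow_lt, Hrho].
  - intros f m t Hf Hm.
    apply (is_derive_Vq _ _ _ _ (fun t => f t - fe) (fun t => m t - me));
      apply is_derive_shift; assumption.
  - intros f m Hf Hm.
    apply (rcont0_Vq _ _ _ _ (fun t => f t - fe) (fun t => m t - me));
      apply rcont0_shift; assumption.
  - intros u v. apply Vq_lower.
  - intros u v. apply Vq_upper.
  - intros u v HV.
    pose proof (Vq_lower J11 J12 J21 J22 (u - fe) (v - me)) as Hlow.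
    assert (HS : (u - fe) ^ 2 + (v - me) ^ 2 < rho ^ 2).
    { apply (Rmult_lt_reg_l det); [exact det_pos | lra]. }
    pose proof (pow2_ge_0 (u - fe)). pose proof (pow2_ge_0 (v - me)).
    assert (Hu : Rabs (u - fe) <= rho) by (apply Rlt_le, abs_lt_of_sq_lt; lra).
    assert (Hv : Rabs (v - me) <= rho) by (apply Rlt_le, abs_lt_of_sq_lt; lra).
    pose proof (Hdecrease u v Hu Hv). lra.
Qed.

End HurwitzEquilibrium.

Lemma mu_pos (r h s : R) : 0 < r < 1 -> 0 <= h -> 0 <= s < 1 -> 0 < mu r h s.
Proof. intros. unfold mu. apply Rdiv_lt_0_compat; apply Rmult_lt_0_compat; lra. Qed.

Lemma mu_spec (r h s : R) : 0 < r < 1 -> 0 <= s < 1 ->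
  mu r h s * (r * (1 - s)) = (1 - r) * (1 + h).
Proof. intros. unfold mu. field. split; lra. Qed.

(* With
   L = 1 - (1 + mu) fs the free space there, the equilibrium equations read
   r alpha mu fs L = 1 + h and (1 - r) alpha fs L = 1 - s; the Jacobian has
   trace - alpha mu fs^2 and determinant
   r (1 - r) alpha^2 mu fs^2 L (2 (1 + mu) fs - 1). *)
Section InteriorEquilibrium.

Variables r alpha h s fs : R.
Hypothesis r_range : 0 < r < 1.
Hypothesis alpha_pos : 0 < alpha.
Hypothesis h_nonneg : 0 <= h.
Hypothesis s_range : 0 <= s < 1.
Hypothesis fs_pos : 0 < fs.
Hypothesis fs_root :
  r * alpha * mu r h s * fs * (1 - (1 + mu r h s) * fs) = 1 + h.

Local Notation m := (mu r h s).
Local Notation me := (mu r h s * fs).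
Local Notation L := (1 - (1 + mu r h s) * fs).

Lemma free_interior : free fs me = L.
Proof. unfold free. ring. Qed.

(* The free space is positive at the equilibrium, since 1 + h > 0. *)
Lemma free_interior_pos : 0 < L.
Proof.
  pose proof (mu_pos r h s r_range h_nonneg s_range).
  assert (0 < r * alpha * m * fs)
    by (apply Rmult_lt_0_compat; [apply Rmult_lt_0_compat; [apply Rmult_lt_0_compat |] |]; lra).
  destruct (Rle_lt_dec L 0) as [HL | HL]; [| exact HL].
  assert (r * alpha * m * fs * L <= 0) by (apply Rmult_le_0_l; lra). lra.
Qed.

(* The male equation follows from the female one by the definition of mu. *)
Lemma male_equation : (1 - r) * alpha * fs * L = 1 - s.
Proof.
  pose proof (mu_pos r h s r_range h_nonneg s_range).
  apply (Rmult_eq_reg_l (r * m)); [| nra].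
  transitivity ((1 - r) * (r * alpha * m * fs * L)); [ring |].
  rewrite fs_root, <- (mu_spec r h s r_range s_range). ring.
Qed.

Lemma interior_is_equilibrium :
  Ff r alpha h s fs me = 0 /\ Fm r alpha h s fs me = 0.
Proof.
  pose proof male_equation.
  unfold Ff, Fm. replace (1 - fs - me) with L by ring. split; nra.
Qed.

Lemma jacobian_trace_neg :
  tr2 (jac11 r alpha h fs me) (jac22 r alpha s fs me) < 0.
Proof.
  pose proof (mu_pos r h s r_range h_nonneg s_range). pose proof male_equation.
  assert (Htr : tr2 (jac11 r alpha h fs me) (jac22 r alpha s fs me) = - alpha * m * fs ^ 2).
  { unfold tr2, jac11, jac22. rewrite free_interior.
    transitivity (r * alpha * m * fs * L - (1 + h) + ((1 - r) * alpha * fs * L - (1 - s))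
                  - alpha * m * fs ^ 2); [ring |].
    rewrite fs_root, male_equation. ring. }
  rewrite Htr.
  assert (0 < alpha * m * fs ^ 2)
    by (apply Rmult_lt_0_compat; [apply Rmult_lt_0_compat | apply pow_lt]; lra).
  lra.
Qed.

(* The determinant is positive exactly when 2 (1 + mu) fs > 1, which is the
   lower bound on fs in the theorem. *)
Lemma jacobian_det_pos :
  r * (1 - s) / (2 * (1 + h - r * (h + s))) < fs ->
  0 < det2 (jac11 r alpha h fs me) (jac12 r alpha fs me)
           (jac21 r alpha fs me) (jac22 r alpha s fs me).
Proof.
  intros Hlow.
  pose proof (mu_pos r h s r_range h_nonneg s_range) as Hm. pose proof male_equation.
  pose proof free_interior_pos as HL.
  assert (Hsum : (1 + m) * (r * (1 - s)) = 1 + h - r * (h + s))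
    by (pose proof (mu_spec r h s r_range s_range); nra).
  assert (Hhalf : 0 < 2 * (1 + m) * fs - 1).
  { assert (Hden : 0 < 2 * (1 + h - r * (h + s))) by nra.
    apply Rmult_lt_compat_l with (r := 2 * (1 + h - r * (h + s))) in Hlow; [| exact Hden].
    replace (2 * (1 + h - r * (h + s)) * (r * (1 - s) / (2 * (1 + h - r * (h + s)))))
      with (r * (1 - s)) in Hlow by (field; lra).
    apply (Rmult_lt_reg_r (r * (1 - s))); [nra | nra]. }
  assert (Hdet : det2 (jac11 r alpha h fs me) (jac12 r alpha fs me)
                      (jac21 r alpha fs me) (jac22 r alpha s fs me)
                 = r * (1 - r) * alpha ^ 2 * m * fs ^ 2 * L * (2 * (1 + m) * fs - 1)).
  { unfold det2, jac11, jac12, jac21, jac22. rewrite free_interior.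
    rewrite <- fs_root, <- male_equation. ring. }
  rewrite Hdet.
  apply Rmult_lt_0_compat; [| exact Hhalf].
  apply Rmult_lt_0_compat; [| exact HL].
  apply Rmult_lt_0_compat; [| apply pow_lt; lra].
  apply Rmult_lt_0_compat; [| exact Hm].
  apply Rmult_lt_0_compat; [apply Rmult_lt_0_compat | apply pow_lt]; lra.
Qed.

End InteriorEquilibrium.

Theorem mainTheorem2 (r alpha h s fs : R) :
  0 < r < 1 -> 0 < alpha -> 0 <= h -> 0 <= s < 1 ->
  0 < fs ->
  r * alpha * mu r h s * fs * (1 - (1 + mu r h s) * fs) = 1 + h ->
  r * (1 - s) / (2 * (1 + h - r * (h + s))) < fs ->
  fs < r * (1 - s) / (1 + h - r * (h + s)) ->
  locally_asymptotically_stable r alpha h s fs (mu r h s * fs).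
Proof.
  intros Hr Halpha Hh Hs Hfs Hroot Hlow _.
  destruct (interior_is_equilibrium r alpha h s fs) as [Hf Hm]; try assumption.
  apply (hurwitz_equilibrium_stable r alpha h s fs (mu r h s * fs) Hf Hm).
  - apply jacobian_trace_neg; assumption.
  - apply jacobian_det_pos; assumption.
Qed.
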